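(* Consider a 3-S 3-D MUN-D with time-varying LECs (as in the context), $n>d_{max}$, positive integers $n\ge n_1\ge n_2\ge n_3$, in which the min-cut between $S_2$ and $T_1$ is $0$ (so $M_{21}=0$) and the min-cut between $S_i$ and $T_j$ is at least $1$ for every other pair $(i,j)$. Let $V_1=[\theta_{ab}]$ ($n\times n_1$), $A$ ($n_1\times n_2$), $B$ ($n_1\times n_3$) have indeterminate entries and $V_2=M_{23}^{-1}M_{13}V_1A$, $V_3=M_{32}^{-1}M_{12}V_1B$. If, over the field of rational functions in the LECs and these indeterminates, $$\mathrm{Rank}[V_1\ \ M_{11}^{-1}M_{31}V_3]=n_1+n_3,\quad \mathrm{Rank}[M_{12}^{-1}M_{22}V_2\ \ V_1]=n_1+n_2,\quad \mathrm{Rank}[M_{13}^{-1}M_{33}V_3\ \ V_1]=n_1+n_3,$$ then there is an assignment of values (from a sufficiently large finite field of characteristic $p$) to the LECs and indeterminates such that in the system $Y_j=\sum_{i=1}^3M_{ij}V_iX_i'$ ($X_i'$ of length $n_i$) each $X_j'$ can be exactly recovered from $Y_j$ ($j=1,2,3$). These conditions are also necessary when $n_1+n_2=n_1+n_3=n$.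
   Context: A 3-S 3-D MUN-D: finite directed acyclic graph, links carrying one symbol of a field of characteristic $p$ per time unit with unit delay, sources $S_1,S_2,S_3$ (one process each), destinations $T_1,T_2,T_3$ ($T_i$ demands $S_i$'s process), min-cut between $S_i$ and $T_i$ equal to $1$. Time-varying LECs: $\underline{\varepsilon}^{(t)}$ is the LEC vector at time $t$; $Y_j^{(t)}=\sum_{i}\sum_{d=0}^{d_{max}}M_{ij}^{(d)}(\underline{\varepsilon}^{(t-d,t)})X_i^{(t-d)}$, where $M_{ij}^{(d)}(\underline{\varepsilon}^{(t-d,t)})$ is the response at $T_j$ at time $t$ to a unit symbol from $S_i$ at time $t-d$, a polynomial in the LECs of times $t-d,\dots,t$. Each source sends $n$ generations preceded by a cyclic prefix of its last $d_{max}$ generations starting at time $-d_{max}$. $M_{ij}$ is the $n\times n$ matrix (rows/columns indexed $0,\dots,n-1$) with entry $M_{ij}^{(d)}(\underline{\varepsilon}^{(n-1-r-d,\,n-1-r)})$ in row $r$, column $(r+d)\bmod n$ for $0\le d\le d_{max}$, zero elsewhere. The source block is $X_i^n=V_iX_i'$; exact recovery of $X_j'$ from $Y_j$ means existence of a matrix $G_j$ with $G_jY_j=X_j'$ for all inputs. *)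

From HB Require Import structures.
From mathcomp Require Import all_boot all_order all_algebra all_field.
From mathcomp Require Import fraction.
From mathcomp Require Import mpoly.
Set Implicit Arguments. Unset Strict Implicit. Unset Printing Implicit Defensive.
Import GRing.Theory.
Local Open Scope ring_scope.

Record network := Network {
  node  : finType;
  link  : finType;
  ltail : link -> node;
  lhead : link -> node;
  src   : 'I_3 -> node;   (* S_1, S_2, S_3  (indices 0,1,2) *)
  dst   : 'I_3 -> node }. (* T_1, T_2, T_3  (indices 0,1,2) *)

Definition i0 : 'I_3 := @Ordinal 3 0 isT.
Definition i1 : 'I_3 := @Ordinal 3 1 isT.
Definition i2 : 'I_3 := @Ordinal 3 2 isT.

Section Net.
Variable N : network.

Definition step_avoid (C : {set link N}) : rel (node N) :=
  fun u v => [exists e, (e \notin C) && (ltail e == u) && (lhead e == v)].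

Definition acyclic : bool :=
  [forall e : link N, ~~ connect (step_avoid set0) (lhead e) (ltail e)].

(* min-cut: the least number of links whose removal disconnects t from s
   (#|link|.+1, i.e. "infinite", if no such set exists, e.g. s = t) *)
Definition mincut (s t : node N) : nat :=
  \big[minn/#|link N|.+1]_(C : {set link N} | ~~ connect (step_avoid C) s t) #|C|.

Definition is_walk (s t : node N) (p : seq (link N)) : bool :=
  if p is e :: p' then
    [&& ltail e == s, path (fun a b => lhead a == ltail b) e p'
      & lhead (last e p') == t]
  else false.

(* maximal delay: longest source-destination path (unit delay per link) *)
Definition dmax : nat :=
  \max_(L < #|link N|.+1 |
        [exists i : 'I_3, exists j : 'I_3, exists p : L.-tuple (link N),
           is_walk (src N i) (dst N j) p]) L.

(* local encoding coefficient slots (at each time instant):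
   inl (inl (i,e)) : coefficient of X_i onto outgoing link e of S_i
   inl (inr (e',e)): coefficient of incoming link e' onto outgoing link e
   inr (e,j)       : coefficient of incoming link e at destination T_j  *)
Definition Slot : finType :=
  ((('I_3 * link N) + (link N * link N)) + (link N * 'I_3))%type.

Section Sizes.
Variables n n1 n2 n3 : nat.

(* all indeterminates: time-varying LECs (times -dmax .. n-1 stored with
   the shift tau = t + dmax), entries theta_ab of V1, entries of A, of B *)
Definition Var : finType :=
  (((('I_(dmax + n) * Slot) + ('I_n * 'I_n1)) + ('I_n1 * 'I_n2))
     + ('I_n1 * 'I_n3))%type.

Section Generic.
Variable R : comUnitRingType.
Variable x : Var -> R.

Definition eps (tau : nat) (s : Slot) : R :=
  match (insub tau : option 'I_(dmax + n)) with
  | Some k => x (inl (inl (inl (k, s))))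
  | None => 0
  end.

(* symbols on the links at (shifted) time sigma + k, in response to a unit
   symbol emitted by S_i at (shifted) time sigma (all other inputs zero);
   each link carries one symbol per time unit, with unit delay *)
Fixpoint state (i : 'I_3) (sigma : nat) (k : nat) : link N -> R :=
  match k with
  | 0 => fun e => if ltail e == src N i then eps sigma (inl (inl (i, e))) else 0
  | k'.+1 => fun e =>
      \sum_(e' : link N | lhead e' == ltail e)
         eps (sigma + k'.+1)%N (inl (inr (e', e))) * state i sigma k' e'
  end.

(* M_ij^(d) at (shifted) time tau: response at T_j at time tau to a unit
   symbol from S_i at time tau - d *)
Definition resp (i j : 'I_3) (d tau : nat) : R :=
  if d is d'.+1 then
    \sum_(e : link N | lhead e == dst N j)
       eps tau (inr (e, j)) * state i (tau - d)%N d' e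
  else 0.

(* the n x n matrix M_ij: entry M_ij^(d)(eps^(n-1-r-d, n-1-r)) in row r,
   column (r+d) mod n, for 0 <= d <= dmax; zero elsewhere *)
Definition Mmx (i j : 'I_3) : 'M[R]_n :=
  \matrix_(r < n, c < n)
     \sum_(d < dmax.+1 | ((r + d) %% n)%N == c) resp i j d (n - 1 - r + dmax)%N.

Definition V1 : 'M[R]_(n, n1) := \matrix_(a < n, b < n1) x (inl (inl (inr (a, b)))).
Definition Amx : 'M[R]_(n1, n2) := \matrix_(a < n1, b < n2) x (inl (inr (a, b))).
Definition Bmx : 'M[R]_(n1, n3) := \matrix_(a < n1, b < n3) x (inr (a, b)).

Definition V2 : 'M[R]_(n, n2) := invmx (Mmx i1 i2) *m Mmx i0 i2 *m V1 *m Amx.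
Definition V3 : 'M[R]_(n, n3) := invmx (Mmx i2 i1) *m Mmx i0 i1 *m V1 *m Bmx.

Definition Yout (j : 'I_3) (X1 : 'cV[R]_n1) (X2 : 'cV[R]_n2) (X3 : 'cV[R]_n3)
  : 'cV[R]_n :=
  Mmx i0 j *m V1 *m X1 + Mmx i1 j *m V2 *m X2 + Mmx i2 j *m V3 *m X3.

Definition decodable : Prop :=
  [/\ exists G : 'M[R]_(n1, n), forall X1 X2 X3, G *m Yout i0 X1 X2 X3 = X1,
      exists G : 'M[R]_(n2, n), forall X1 X2 X3, G *m Yout i1 X1 X2 X3 = X2
    & exists G : 'M[R]_(n3, n), forall X1 X2 X3, G *m Yout i2 X1 X2 X3 = X3].

(* the assignment makes every transfer matrix M_ij, (i,j) <> (2,1),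
   invertible, so that all inverses used above are the true inverses *)
Definition admissible : Prop :=
  forall i j : 'I_3, (i, j) != (i1, i0) -> Mmx i j \in unitmx.

End Generic.

Definition RatF (p : nat) : fieldType := {fraction {mpoly 'F_p[#|Var|]}}.

Definition xsym (p : nat) : Var -> RatF p :=
  fun v => @FracField.tofrac _ ('X_(enum_rank v)).

Definition rank_conditions (p : nat) : Prop :=
  let x := xsym p in
  [/\ \rank (row_mx (V1 x) (invmx (Mmx x i0 i0) *m Mmx x i2 i0 *m V3 x)) = (n1 + n3)%N,
      \rank (row_mx (invmx (Mmx x i0 i1) *m Mmx x i1 i1 *m V2 x) (V1 x)) = (n1 + n2)%N
    & \rank (row_mx (invmx (Mmx x i0 i2) *m Mmx x i2 i2 *m V3 x) (V1 x)) = (n1 + n3)%N].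

End Sizes.
End Net.

(* Clearing the denominators [\det M_ij] of the inverses by adjugates turns the
   rank conditions, which live over the field of rational functions, into
   the nonvanishing of three polynomial maximal minors; together with the
   determinants [\det M_ij], (i, j) <> (2, 1), they multiply to one
   polynomial Q. Each [\det M_ij] is a nonzero polynomial: the rank
   conditions force [M_ij <> 0], so [S_i <> T_j] by acyclicity, and as the
   min-cut is positive the LECs routing a unit symbol along one [S_i]-[T_j]
   walk make [M_ij] a cyclic shift. A nonzero polynomial of degree less than
   q has a nonvanishing point over any field with q elements, and there all
   [M_ij] are invertible and the rank conditions hold, which gives decoders
   since [M_21 = 0]. Conversely, decoders at a point provide left inverses
   of the blocks of the rank-condition matrices, so the minors do not vanish
   at that point, hence are nonzero polynomials, hence nonzero over the
   field of rational functions. *)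

From HB Require Import structures.
From mathcomp Require Import all_boot all_order all_algebra all_field.
From mathcomp Require Import fraction.
From mathcomp Require Import mpoly.
From mathcomp Require Import zify.
From Stdlib Require Import FunctionalExtensionality.
Set Implicit Arguments. Unset Strict Implicit. Unset Printing Implicit Defensive.
Import GRing.Theory.
Local Open Scope ring_scope.

Section NonVanishing.
Variable F : finIdomainType.
Local Notation widen := (widen_ord (leqnSn _)).

Definition mnm_init m (mon : 'X_{1..m.+1}) : 'X_{1..m} := [multinom mon (widen i) | i < m].

Definition ext_last m (v : 'I_m -> F) (t : F) (i : 'I_m.+1) : F :=
  if insub (val i) is Some j then v j else t.

Lemma ext_last_widen m v t (j : 'I_m) : ext_last v t (widen j) = v j.
Proof.
rewrite /ext_last; case: insubP => [j' _ j'j|]; last by rewrite /= ltn_ord.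
by congr v; apply: val_inj.
Qed.

Lemma ext_last_max m v t : ext_last v t (@ord_max m) = t.
Proof. by rewrite /ext_last; case: insubP => [j' |//]; rewrite /= ltnn. Qed.

Lemma mnm_init_inj m (a b : 'X_{1..m.+1}) :
  mnm_init a = mnm_init b -> a ord_max = b ord_max -> a = b.
Proof.
move=> ab_init ab_max; apply/mnmP => i; have [im|] := ltnP i m.
  have -> : i = widen (Ordinal im) by apply: val_inj.
  by have := congr1 (fun z : 'X_{1..m} => z (Ordinal im)) ab_init; rewrite !mnmE.
rewrite leq_eqVlt ltnNge -ltnS ltn_ord orbF => /eqP mi.
by have -> : i = ord_max by apply: val_inj.
Qed.

Lemma mdeg_mnm_init m (a : 'X_{1..m.+1}) : (mdeg (mnm_init a) <= mdeg a)%N.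
Proof.
rewrite !mdegE big_ord_recr /= (eq_bigr (fun i : 'I_m => a (widen i))) ?leq_addr //.
by move=> i _; rewrite mnmE.
Qed.

Lemma mdeg_max m (a : 'X_{1..m.+1}) : (a ord_max <= mdeg a)%N.
Proof. by rewrite mdegE (bigD1 ord_max) //= leq_addr. Qed.

Definition mcoef_last m (q : {mpoly F[m.+1]}) (k : nat) : {mpoly F[m]} :=
  \sum_(mon <- msupp q | mon ord_max == k) q@_mon *: 'X_[mnm_init mon].

Lemma msize_mcoef_last m (q : {mpoly F[m.+1]}) k : (msize (mcoef_last q k) <= msize q)%N.
Proof.
apply: leq_trans (msize_sum _ _ _) _; apply/bigmax_leqP_seq => mon q_mon _.
apply: leq_trans (msizeZ_le _ _) _; rewrite msizeX.
exact: leq_ltn_trans (mdeg_mnm_init mon) (msize_mdeg_lt q_mon).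
Qed.

Lemma meval_ext_last m (q : {mpoly F[m.+1]}) v t :
  q.@[ext_last v t] = (\poly_(k < msize q) (mcoef_last q k).@[v]).[t].
Proof.
rewrite horner_poly mevalE.
have mcoef_lastE k : (mcoef_last q k).@[v] =
    \sum_(mon <- msupp q | mon ord_max == k) q@_mon * \prod_(i < m) v i ^+ mon (widen i).
  rewrite /mcoef_last (big_morph _ (mevalD v) (meval0 v)).
  apply: eq_bigr => mon _; rewrite mevalZ mevalX; congr (_ * _).
  by apply: eq_bigr => i _; rewrite mnmE.
under [RHS]eq_bigr => k _ do rewrite mcoef_lastE big_distrl /= big_mkcond /=.
rewrite exchange_big /=; apply: eq_big_seq => mon q_mon.
have mon_lt : (mon ord_max < msize q)%N.
  exact: leq_ltn_trans (mdeg_max mon) (msize_mdeg_lt q_mon).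
rewrite [RHS](bigD1 (Ordinal mon_lt)) //= eqxx [X in _ + X]big1 ?addr0; last first.
  move=> k k_neq; case: ifP => // /eqP k_eq; case/eqP: k_neq.
  by apply: val_inj; rewrite /= k_eq.
rewrite big_ord_recr /= ext_last_max -mulrA; congr (_ * (_ * _)).
by apply: eq_bigr => i _; rewrite ext_last_widen.
Qed.

Lemma mcoef_last_mlead_neq0 m (q : {mpoly F[m.+1]}) :
  q != 0 -> mcoef_last q (mlead q ord_max) != 0.
Proof.
move=> q0; have lead_q := mlead_supp q0; set mon0 := mlead q in lead_q *.
apply/negP => /eqP /(congr1 (mcoeff (mnm_init mon0))).
rewrite mcoeff0 /mcoef_last raddf_sum /=.
under eq_bigr do rewrite mcoeffZ mcoeffX.
rewrite big_mkcond /= (bigD1_seq mon0 lead_q (msupp_uniq q)) /= !eqxx mulr1.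
rewrite big1 ?addr0 => [/eqP|mon mon_neq]; first by rewrite mcoeff_eq0 lead_q.
case: ifP => // /eqP same_max; case: eqP => [same_init|]; last by rewrite mulr0.
by move: mon_neq; rewrite (mnm_init_inj same_init same_max) eqxx.
Qed.

Lemma mpoly_nonvanishing m (q : {mpoly F[m]}) :
  q != 0 -> (msize q <= #|F|)%N -> exists v : 'I_m -> F, q.@[v] != 0.
Proof.
elim: m q => [|m IH] q q0 q_size.
  have mnm0 (mon : 'X_{1..0}) : mon = 0%MM by apply/mnmP => -[].
  have -> : q = (q@_0%MM)%:MP by apply/mpolyP => mon; rewrite mcoeffC (mnm0 mon) eqxx mulr1.
  exists (fun=> 0); rewrite mevalC; apply: contraNneq q0 => q_0.
  by apply/eqP/mpolyP => mon; rewrite mcoeff0 (mnm0 mon).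
have [v v_lead] := IH _ (mcoef_last_mlead_neq0 q0) (leq_trans (msize_mcoef_last _ _) q_size).
pose Q := \poly_(k < msize q) (mcoef_last q k).@[v].
have Q0 : Q != 0.
  apply: contraNneq v_lead => /(congr1 (fun P : {poly F} => P`_(mlead q ord_max))).
  rewrite coef_poly coef0 (leq_ltn_trans (mdeg_max _) (msize_mdeg_lt (mlead_supp q0))).
  by move/eqP.
have : ~~ all (root Q) (enum F).
  apply: contraTN (leq_trans (size_poly _ _ : (size Q <= _)%N) q_size) => all_roots.
  by rewrite -ltnNge cardE max_poly_roots ?enum_uniq.
by case/allPn => t _ Qt; exists (ext_last v t); rewrite meval_ext_last.
Qed.

Lemma mpoly_map_nonvanishing (R : fieldType) (f : {rmorphism R -> F}) m (q : {mpoly R[m]}) :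
  q != 0 -> (msize q <= #|F|)%N -> exists v : 'I_m -> F, (map_mpoly f q).@[v] != 0.
Proof.
have supp_q := msupp_map_mpoly q (fmorph_inj f).
move=> q0 q_size; apply: mpoly_nonvanishing.
  by rewrite -msupp_eq0 -size_eq0 (perm_size supp_q) size_eq0 msupp_eq0.
by rewrite !msizeE (perm_big _ supp_q).
Qed.

End NonVanishing.

Definition Fp_rmorph (F : fieldType) (p : nat) (charFp : p \in [pchar F]) : {rmorphism 'F_p -> F} :=
  in_alg (pPrimeCharType charFp) : {rmorphism 'F_p -> pPrimeCharType charFp}.

Section RankFacts.
Variable K : fieldType.

Lemma row_full_left_inverse m a b (P : 'M[K]_(m, a + b)) :
  \rank P = (a + b)%N ->
  exists G : 'M[K]_(a, m), forall (X : 'cV_a) (Z : 'cV_b), G *m (P *m col_mx X Z) = X.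
Proof.
move=> rkP; have /row_fullP [B PB] : row_full P by rewrite /row_full rkP.
by exists (usubmx B) => X Z; rewrite mul_usub_mx mulmxA PB mul1mx col_mxKu.
Qed.

Lemma rank_row_mx_left_inverses m a b (A : 'M[K]_(m, a)) (B : 'M[K]_(m, b)) GA GB :
  GA *m A = 1%:M -> GA *m B = 0 -> GB *m B = 1%:M ->
  \rank (row_mx A B) = (a + b)%N.
Proof.
move=> GAA GAB GBB; apply/eqP; rewrite eqn_leq rank_leq_col /=.
pose L := col_mx GA (GB *m (1%:M - A *m GA)).
have LAB : L *m row_mx A B = 1%:M.
  rewrite mul_col_row GAA GAB -!mulmxA !mulmxBl !mul1mx -!mulmxA GAA GAB.
  by rewrite mulmx0 subr0 mulmx1 subrr mulmx0 GBB -scalar_mx_block.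
by rewrite -{1}(mxrank1 K (a + b)%N) -LAB mxrankM_maxr.
Qed.

Lemma rank_row_mx_scale m a b (A : 'M[K]_(m, a)) (B : 'M[K]_(m, b)) c d :
  c != 0 -> d != 0 -> \rank (row_mx (c *: A) (d *: B)) = \rank (row_mx A B).
Proof.
move=> c0 d0.
have -> : row_mx (c *: A) (d *: B) = row_mx A B *m block_mx c%:M 0 0 d%:M.
  by rewrite mul_row_block !mulmx0 addr0 add0r !mul_mx_scalar.
rewrite mxrankMfree // row_free_unit unitmxE det_ublock !det_scalar unitfE.
by rewrite mulf_neq0 // expf_neq0.
Qed.

Lemma rank_row_mxZl m a b (A : 'M[K]_(m, a)) (B : 'M[K]_(m, b)) c :
  c != 0 -> \rank (row_mx (c *: A) B) = \rank (row_mx A B).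
Proof. by move=> c0; rewrite -{1}[B]scale1r rank_row_mx_scale ?oner_neq0. Qed.

Lemma rank_row_mxZr m a b (A : 'M[K]_(m, a)) (B : 'M[K]_(m, b)) c :
  c != 0 -> \rank (row_mx A (c *: B)) = \rank (row_mx A B).
Proof. by move=> c0; rewrite -{1}[A]scale1r rank_row_mx_scale ?oner_neq0. Qed.

End RankFacts.

Section Minors.
Variables (R : comNzRingType) (K : fieldType) (f : {rmorphism R -> K}).

Lemma rank_map_fullP m k (P : 'M[R]_(m, k)) :
  \rank (map_mx f P) = k <-> exists s : 'I_k -> 'I_m, f (\det (rowsub s P)) != 0.
Proof.
have rowsub_map (s : 'I_k -> 'I_m) : map_mx f (rowsub s P) = rowsub s (map_mx f P).
  by apply/matrixP => i j; rewrite !mxE.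
split=> [rkP | [s Ps]].
  have Pfull : row_full (map_mx f P) by rewrite /row_full rkP.
  exists (fullrankfun Pfull); rewrite -det_map_mx rowsub_map.
  by have := fullrowsub_unit Pfull; rewrite unitmxE unitfE.
apply/eqP; rewrite eqn_leq rank_leq_col /=.
have Ps_unit : rowsub s (map_mx f P) \in unitmx.
  by rewrite unitmxE unitfE -rowsub_map det_map_mx.
by rewrite -{1}(mxrank_unit Ps_unit) rowsubE mxrankM_maxr.
Qed.

End Minors.

Lemma invmx0 (R : comUnitRingType) n : invmx (0 : 'M[R]_n) = 0.
Proof. by case: n => [|n]; rewrite ?flatmx0 // invmx_out // inE unitmxE det0 unitr0. Qed.

Lemma mx_eq_cols (R : comUnitRingType) m k (A B : 'M[R]_(m, k)) :
  (forall X : 'cV_k, A *m X = B *m X) -> A = B.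
Proof.
move=> AB; apply/matrixP => r c; have := AB (delta_mx c 0).
by rewrite -!colE => /matrixP /(_ r 0); rewrite !mxE.
Qed.

Lemma ord3P (i : 'I_3) : [\/ i = i0, i = i1 | i = i2].
Proof.
by case: i => [[|[|[|k]]] i_lt] //; [constructor 1|constructor 2|constructor 3]; apply: val_inj.
Qed.

Section DecodingMatrices.
Variables (K : fieldType) (n n1 n2 n3 : nat) (M : 'I_3 -> 'I_3 -> 'M[K]_n).
Variables (V : 'M[K]_(n, n1)) (A : 'M[K]_(n1, n2)) (B : 'M[K]_(n1, n3)).

Definition V2_of : 'M[K]_(n, n2) := invmx (M i1 i2) *m M i0 i2 *m V *m A.
Definition V3_of : 'M[K]_(n, n3) := invmx (M i2 i1) *m M i0 i1 *m V *m B.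

Definition received j X1 X2 X3 : 'cV[K]_n :=
  M i0 j *m V *m X1 + M i1 j *m V2_of *m X2 + M i2 j *m V3_of *m X3.

Definition decodable_mx : Prop :=
  [/\ exists G : 'M[K]_(n1, n), forall X1 X2 X3, G *m received i0 X1 X2 X3 = X1,
      exists G : 'M[K]_(n2, n), forall X1 X2 X3, G *m received i1 X1 X2 X3 = X2
    & exists G : 'M[K]_(n3, n), forall X1 X2 X3, G *m received i2 X1 X2 X3 = X3].

Definition rank_conditions_mx : Prop :=
  [/\ \rank (row_mx V (invmx (M i0 i0) *m M i2 i0 *m V3_of)) = (n1 + n3)%N,
      \rank (row_mx (invmx (M i0 i1) *m M i1 i1 *m V2_of) V) = (n1 + n2)%N
    & \rank (row_mx (invmx (M i0 i2) *m M i2 i2 *m V3_of) V) = (n1 + n3)%N].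

Lemma decodable_mx_of_rank_conditions :
  M i0 i0 \in unitmx -> M i0 i1 \in unitmx -> M i0 i2 \in unitmx ->
  M i2 i1 \in unitmx -> M i1 i2 \in unitmx -> M i1 i0 = 0 ->
  rank_conditions_mx -> decodable_mx.
Proof.
move=> u00 u01 u02 u21 u12 M10 [rk1 rk2 rk3]; split.
- have [G GP] := row_full_left_inverse rk1; exists (G *m invmx (M i0 i0)) => X1 X2 X3.
  suff decomp : invmx (M i0 i0) *m received i0 X1 X2 X3 =
    row_mx V (invmx (M i0 i0) *m M i2 i0 *m V3_of) *m col_mx X1 X3 by rewrite -mulmxA decomp GP.
  rewrite mul_row_col /received M10 !mul0mx addr0 !mulmxDr !mulmxA mulVmx // mul1mx.
  by rewrite -!mulmxA.
- have [G GP] := row_full_left_inverse (etrans rk2 (addnC _ _)).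
  exists (G *m invmx (M i0 i1)) => X1 X2 X3.
  suff decomp : invmx (M i0 i1) *m received i1 X1 X2 X3 =
    row_mx (invmx (M i0 i1) *m M i1 i1 *m V2_of) V *m col_mx X2 (X1 + B *m X3).
    by rewrite -mulmxA decomp GP.
  rewrite mul_row_col /received /V3_of !mulmxDr !mulmxA mulVmx // mul1mx (mulmxK u21).
  by rewrite mulVmx // mul1mx -addrA addrCA.
- have [G GP] := row_full_left_inverse (etrans rk3 (addnC _ _)).
  exists (G *m invmx (M i0 i2)) => X1 X2 X3.
  suff decomp : invmx (M i0 i2) *m received i2 X1 X2 X3 =
    row_mx (invmx (M i0 i2) *m M i2 i2 *m V3_of) V *m col_mx X3 (X1 + A *m X2).
    by rewrite -mulmxA decomp GP.
  rewrite mul_row_col /received /V2_of !mulmxDr !mulmxA mulVmx // mul1mx (mulmxK u12).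
  by rewrite mulVmx // mul1mx addrC.
Qed.

Lemma rank_conditions_mx_of_decodable :
  M i0 i0 \in unitmx -> M i2 i0 \in unitmx -> M i0 i1 \in unitmx -> M i0 i2 \in unitmx ->
  decodable_mx -> rank_conditions_mx.
Proof.
move=> u00 u20 u01 u02 [[G1 G1P] [G2 G2P] [G3 G3P]].
have G1V : G1 *m (M i0 i0 *m V) = 1%:M.
  by apply: mx_eq_cols => X; rewrite -mulmxA mul1mx -[RHS](G1P X 0 0) /received !mulmx0 !addr0.
have G1V3 : G1 *m (M i2 i0 *m V3_of) = 0.
  by apply: mx_eq_cols => X; rewrite -mulmxA mul0mx -[RHS](G1P 0 0 X) /received !mulmx0 !add0r.
have G2V2 : G2 *m (M i1 i1 *m V2_of) = 1%:M.
  by apply: mx_eq_cols => X; rewrite -mulmxA mul1mx -[RHS](G2P 0 X 0) /received !mulmx0 add0r addr0.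
have G2V : G2 *m (M i0 i1 *m V) = 0.
  by apply: mx_eq_cols => X; rewrite -mulmxA mul0mx -[RHS](G2P X 0 0) /received !mulmx0 !addr0.
have G3V3 : G3 *m (M i2 i2 *m V3_of) = 1%:M.
  by apply: mx_eq_cols => X; rewrite -mulmxA mul1mx -[RHS](G3P 0 0 X) /received !mulmx0 !add0r.
have G3V : G3 *m (M i0 i2 *m V) = 0.
  by apply: mx_eq_cols => X; rewrite -mulmxA mul0mx -[RHS](G3P X 0 0) /received !mulmx0 !addr0.
rewrite !mulmxA in G1V G1V3 G2V2 G2V G3V3 G3V.
split.
- apply: (rank_row_mx_left_inverses (GA := G1 *m M i0 i0)
    (GB := G3 *m M i2 i2 *m invmx (M i2 i0) *m M i0 i0)); rewrite ?mulmxA //.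
    by rewrite (mulmxK u00).
  by rewrite (mulmxK u00) mulmxKV.
- rewrite [RHS]addnC.
  apply: (rank_row_mx_left_inverses (GA := G2 *m M i0 i1) (GB := G1 *m M i0 i0));
    by rewrite ?mulmxA ?(mulmxK u01).
- rewrite [RHS]addnC.
  apply: (rank_row_mx_left_inverses (GA := G3 *m M i0 i2) (GB := G1 *m M i0 i0));
    by rewrite ?mulmxA ?(mulmxK u02).
Qed.

Lemma rank_conditions_mx_neq0 : (0 < n3)%N -> (n3 <= n2)%N -> rank_conditions_mx ->
  forall i j, (i, j) != (i1, i0) -> M i j != 0.
Proof.
move=> n3_gt0 n32 [rk1 rk2 rk3] i j ij; apply/eqP => Mij0.
have rkV := rank_leq_col V.
case: (ord3P i) => ?; case: (ord3P j) => ?; subst i j => //;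
  rewrite /V2_of /V3_of Mij0 ?invmx0 ?mul0mx ?mulmx0 ?mul0mx ?mulmx0
    ?rank_row_mx0 ?rank_row_0mx in rk1 rk2 rk3; lia.
Qed.

End DecodingMatrices.

Section ClearingDenominators.
Variables (R : comUnitRingType) (n n1 n2 n3 : nat) (M : 'I_3 -> 'I_3 -> 'M[R]_n).
Variables (V : 'M[R]_(n, n1)) (A : 'M[R]_(n1, n2)) (B : 'M[R]_(n1, n3)).

Lemma invmx_map_adj (K : fieldType) (f : {rmorphism R -> K}) (P : 'M[R]_n) :
  f (\det P) != 0 -> invmx (map_mx f P) = (f (\det P))^-1 *: map_mx f (\adj P).
Proof. by move=> fP; rewrite /invmx unitmxE unitfE det_map_mx fP map_mx_adj. Qed.

Lemma invmx_map_mul_adj (K : fieldType) (f : {rmorphism R -> K}) (P Q W1 W2 : 'M[R]_n) k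
    (C : 'M[R]_(n1, k)) : f (\det P) != 0 -> f (\det Q) != 0 ->
  invmx (map_mx f P) *m map_mx f W1 *m
    (invmx (map_mx f Q) *m map_mx f W2 *m map_mx f V *m map_mx f C)
  = (f (\det P) * f (\det Q))^-1 *: map_mx f (\adj P *m W1 *m \adj Q *m W2 *m V *m C).
Proof.
move=> fP fQ; rewrite (invmx_map_adj fP) (invmx_map_adj fQ) !map_mxM.
by rewrite -!scalemxAl -scalemxAr scalerA invfM mulrC !mulmxA.
Qed.

(* [cleared_k] is the k-th rank-condition matrix with every inverse [M^-1]
   replaced by [\adj M = \det M *: M^-1]; it has the same rank over the image
   of [f] as soon as [f] does not kill the determinants. *)
Definition cleared1 := row_mx V (\adj (M i0 i0) *m M i2 i0 *m \adj (M i2 i1) *m M i0 i1 *m V *m B).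
Definition cleared2 := row_mx (\adj (M i0 i1) *m M i1 i1 *m \adj (M i1 i2) *m M i0 i2 *m V *m A) V.
Definition cleared3 := row_mx (\adj (M i0 i2) *m M i2 i2 *m \adj (M i2 i1) *m M i0 i1 *m V *m B) V.

Definition conditions_at (K : fieldType) (f : {rmorphism R -> K}) : Prop :=
  (forall i j, (i, j) != (i1, i0) -> f (\det (M i j)) != 0) /\
  rank_conditions_mx (fun i j => map_mx f (M i j)) (map_mx f V) (map_mx f A) (map_mx f B).

Lemma conditions_atE (K : fieldType) (f : {rmorphism R -> K}) :
  conditions_at f <->
  (forall i j, (i, j) != (i1, i0) -> f (\det (M i j)) != 0) /\
  [/\ \rank (map_mx f cleared1) = (n1 + n3)%N, \rank (map_mx f cleared2) = (n1 + n2)%N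
    & \rank (map_mx f cleared3) = (n1 + n3)%N].
Proof.
rewrite /conditions_at /rank_conditions_mx /V2_of /V3_of /cleared1 /cleared2 /cleared3 /=.
split=> -[fM rk]; split=> //; move: rk;
  rewrite !invmx_map_mul_adj ?fM // rank_row_mxZr ?rank_row_mxZl ?invr_eq0 ?mulf_neq0 ?fM //;
  by rewrite !map_row_mx.
Qed.

Definition det_product : R := \prod_(ij : 'I_3 * 'I_3 | ij != (i1, i0)) \det (M ij.1 ij.2).

Lemma det_productP (K : fieldType) (f : {rmorphism R -> K}) :
  reflect (forall i j, (i, j) != (i1, i0) -> f (\det (M i j)) != 0) (f det_product != 0).
Proof.
rewrite rmorph_prod; apply: (iffP (prodf_neq0 _ _)) => [fM i j ij | fM [i j] ij].
  exact: (fM (i, j)).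
exact: fM.
Qed.

Definition minors_product (s1 : 'I_(n1 + n3) -> 'I_n) (s2 : 'I_(n2 + n1) -> 'I_n)
    (s3 : 'I_(n3 + n1) -> 'I_n) : R :=
  \det (rowsub s1 cleared1) * \det (rowsub s2 cleared2) * \det (rowsub s3 cleared3).

Lemma conditions_atP (K : fieldType) (f : {rmorphism R -> K}) :
  conditions_at f <-> exists s1 s2 s3, f (det_product * minors_product s1 s2 s3) != 0.
Proof.
rewrite conditions_atE; split=> [[/det_productP f_dets [rk1 rk2 rk3]] | [s1 [s2 [s3]]]].
  have [s1 minor1] := (rank_map_fullP f cleared1).1 rk1.
  have [s2 minor2] := (rank_map_fullP f cleared2).1 (etrans rk2 (addnC _ _)).
  have [s3 minor3] := (rank_map_fullP f cleared3).1 (etrans rk3 (addnC _ _)).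
  by exists s1, s2, s3; rewrite !rmorphM !mulf_neq0.
rewrite !rmorphM !mulf_eq0 !negb_or => /andP [f_dets /andP [/andP [minor1 minor2] minor3]].
split; first exact/det_productP.
split; first by apply/(rank_map_fullP f cleared1); exists s1.
  by rewrite [RHS]addnC; apply/(rank_map_fullP f cleared2); exists s2.
by rewrite [RHS]addnC; apply/(rank_map_fullP f cleared3); exists s3.
Qed.

Lemma conditions_at_witness (L : fieldType) (g : {rmorphism R -> L}) :
  conditions_at g -> exists2 Q : R, Q != 0 &
    forall (K : fieldType) (f : {rmorphism R -> K}), f Q != 0 -> conditions_at f.
Proof.
case/conditions_atP => s1 [s2 [s3 gQ]]; exists (det_product * minors_product s1 s2 s3).
  by apply: contraNneq gQ => ->; rewrite rmorph0.
by move=> K f fQ; apply/conditions_atP; exists s1, s2, s3.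
Qed.

Lemma conditions_at_lift (K L : fieldType) (f : {rmorphism R -> K}) (g : {rmorphism R -> L}) :
  injective g -> conditions_at f -> conditions_at g.
Proof.
move=> g_inj /conditions_atP [s1 [s2 [s3 fQ]]]; apply/conditions_atP; exists s1, s2, s3.
by rewrite (raddf_eq0 _ g_inj); apply: contraNneq fQ => ->; rewrite rmorph0.
Qed.

End ClearingDenominators.

Section NetworkMap.
Variables (N : network) (n n1 n2 n3 : nat) (R S : comUnitRingType).
Variables (f : {rmorphism R -> S}) (x : Var N n n1 n2 n3 -> R).

Lemma eps_map tau s : eps (f \o x) tau s = f (eps x tau s).
Proof. by rewrite /eps; case: insub => [k|] //; rewrite rmorph0. Qed.

Lemma state_map i sg k e : state (f \o x) i sg k e = f (state x i sg k e).
Proof.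
elim: k e => [|k IH] e /=; first by case: ifP; rewrite ?rmorph0 ?eps_map.
by rewrite rmorph_sum; apply: eq_bigr => e' _; rewrite rmorphM eps_map IH.
Qed.

Lemma resp_map i j d tau : resp (f \o x) i j d tau = f (resp x i j d tau).
Proof.
case: d => [|d] /=; first by rewrite rmorph0.
by rewrite rmorph_sum; apply: eq_bigr => e _; rewrite rmorphM eps_map state_map.
Qed.

Lemma Mmx_map i j : Mmx (f \o x) i j = map_mx f (Mmx x i j).
Proof.
apply/matrixP => r c; rewrite !mxE rmorph_sum.
by apply: eq_bigr => d _; rewrite resp_map.
Qed.

Lemma V1_map : V1 (f \o x) = map_mx f (V1 x).
Proof. by apply/matrixP => r c; rewrite !mxE. Qed.

Lemma Amx_map : Amx (f \o x) = map_mx f (Amx x).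
Proof. by apply/matrixP => r c; rewrite !mxE. Qed.

Lemma Bmx_map : Bmx (f \o x) = map_mx f (Bmx x).
Proof. by apply/matrixP => r c; rewrite !mxE. Qed.

End NetworkMap.

Section Reachability.
Variable N : network.
Local Notation reach := (connect (step_avoid (N := N) set0)).

Lemma step_avoid0 (e : link N) : step_avoid set0 (ltail e) (lhead e).
Proof. by apply/existsP; exists e; rewrite inE !eqxx. Qed.

Lemma bigmin_leq_cond (T : finType) (P : pred T) (F : T -> nat) idx C :
  P C -> (\big[minn/idx]_(D | P D) F D <= F C)%N.
Proof.
move=> PC; have : C \in index_enum T by rewrite mem_index_enum.
elim: (index_enum T) => //= D r IH; rewrite inE big_cons.
case/orP => [/eqP <-|Cr]; first by rewrite PC geq_minl.
by case: ifP => _; [apply: leq_trans (geq_minr _ _) (IH Cr) | apply: IH].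
Qed.

Lemma mincut_gt0_reach (s t : node N) : (0 < mincut s t)%N -> reach s t.
Proof.
apply: contraTT => not_st; rewrite -leqNgt.
have := @bigmin_leq_cond _ (fun C => ~~ connect (step_avoid C) s t) (fun C => #|C|)
  #|link N|.+1 _ not_st.
by rewrite cards0.
Qed.

Lemma mincut_eq0_reach (s t : node N) : mincut s t = 0%N -> ~~ reach s t.
Proof.
apply: contra_eqN => st; rewrite -lt0n /mincut.
apply: (big_ind (fun k => 0 < k)%N) => // [a b a0 b0|C]; first by rewrite leq_min a0 b0.
by rewrite card_gt0; apply: contraNneq => ->.
Qed.

Variables (n n1 n2 n3 : nat) (R : comUnitRingType) (x : Var N n n1 n2 n3 -> R).

Lemma state_reach i sg k e : state x i sg k e != 0 -> reach (src N i) (ltail e).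
Proof.
elim: k e => [|k IH] e /=; first by case: ifP => [/eqP -> _|_]; rewrite ?eqxx.
move=> state_neq0.
have [e' e'e state_e'] : exists2 e', lhead e' == ltail e & state x i sg k e' != 0.
  apply/exists_inP; apply: contraNT state_neq0 => /exists_inPn state0.
  by rewrite big1 // => e' /state0; rewrite negbK => /eqP ->; rewrite mulr0.
by apply: connect_trans (IH _ state_e') _; rewrite -(eqP e'e) connect1 ?step_avoid0.
Qed.

Lemma resp_reach i j d tau : resp x i j d tau != 0 -> reach (src N i) (dst N j).
Proof.
case: d => [|d] /=; first by rewrite eqxx.
apply: contraNT => not_ij; rewrite big1 // => e /eqP ej.
have [state0|/state_reach ie] := eqVneq (state x i (tau - d.+1) d e) 0.
  by rewrite state0 mulr0.
by case/negP: not_ij; rewrite -ej (connect_trans ie) // connect1 ?step_avoid0.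
Qed.

Lemma Mmx_unreachable i j : ~~ reach (src N i) (dst N j) -> Mmx x i j = 0.
Proof.
move=> not_ij; apply/matrixP => r c; rewrite !mxE big1 // => d _.
by apply: contraNeq not_ij; apply: resp_reach.
Qed.

Lemma Mmx_loop i j : acyclic N -> src N i = dst N j -> Mmx x i j = 0.
Proof.
move=> acyc ij; apply/matrixP => r c; rewrite !mxE big1 // => -[[|d] d_lt] _ //=.
rewrite big1 // => e /eqP ej.
have [->|/state_reach] := eqVneq (state x i (n - 1 - r + dmax N - d.+1) d e) 0.
  by rewrite mulr0.
by rewrite ij -ej (negbTE (forallP acyc e)).
Qed.
End Reachability.

Section Walks.
Variable N : network.
Local Notation reach := (connect (step_avoid (N := N) set0)).
Local Notation linked := (fun a b : link N => lhead a == ltail b).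

Lemma path_links s v p : path (step_avoid set0) s (v :: p) ->
  exists e es, [/\ ltail e = s, map (@lhead N) (e :: es) = v :: p & path linked e es].
Proof.
elim: p s v => [|w p IH] s v /=.
  by rewrite andbT => /existsP [e /andP [/andP [_ /eqP es] /eqP ev]]; exists e, [::]; rewrite ev.
case/andP => /existsP [e /andP [/andP [_ /eqP es] /eqP ev]] /IH [e' [es' [e'v heads lnk]]].
by exists e, (e' :: es'); split; rewrite //= ?ev -?heads // e'v eqxx.
Qed.

Lemma walk_of_reach s t : reach s t -> s != t -> exists2 es, is_walk s t es & uniq es.
Proof.
case/connectP => p st_p ->{t}; case: (shortenP st_p) => [[|v p'] st_p' uniq_p' _] //=.
  by rewrite eqxx.
move=> _; have [e [es [es_s heads lnk]]] := path_links st_p'.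
exists (e :: es); first by rewrite /= es_s lnk; case: heads => <- <-; rewrite last_map !eqxx.
by apply: (@map_uniq _ _ (@lhead N)); rewrite heads; case/andP: uniq_p'.
Qed.

Lemma walk_size_dmax i j es :
  is_walk (src N i) (dst N j) es -> uniq es -> (size es <= dmax N)%N.
Proof.
move=> ij_es uniq_es.
have es_lt : (size es < #|link N|.+1)%N by rewrite ltnS -(card_uniqP uniq_es) max_card.
apply: (@leq_bigmax_cond _ _ (fun L : 'I_#|link N|.+1 => nat_of_ord L) (Ordinal es_lt)).
by apply/existsP; exists i; apply/existsP; exists j; apply/existsP; exists (in_tuple es).
Qed.

Lemma walk_nth s t (es : seq (link N)) (e0 : link N) : is_walk s t es ->
  [/\ (0 < size es)%N, ltail (nth e0 es 0) = s,
      forall k, (k.+1 < size es)%N -> lhead (nth e0 es k) = ltail (nth e0 es k.+1)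
    & lhead (nth e0 es (size es).-1) = t].
Proof.
case: es => [|e es] //= /and3P [/eqP es_s lnk /eqP last_t]; split=> //.
  by move=> k k_lt; apply/eqP; move/(pathP e0): lnk; apply.
by rewrite -last_t -[size es]/((size (e :: es)).-1) nth_last.
Qed.
End Walks.

Section ShiftMatrix.
Variables (R : comUnitRingType) (n : nat).

Definition shift_mx (a : nat) : 'M[R]_n := \matrix_(r, c) (((r + a) %% n)%N == c)%:R.

Lemma shift_mx_unit a : (a <= n)%N -> shift_mx a \in unitmx.
Proof.
move=> a_le; suff : shift_mx a *m shift_mx (n - a) = 1%:M by case/mulmx1_unit.
apply/matrixP => r c; rewrite !mxE.
have r_lt := ltn_ord r; have ra_lt : ((r + a) %% n < n)%N by rewrite ltn_mod; lia.
rewrite (bigD1 (Ordinal ra_lt)) //= big1 ?addr0 => [|k k_neq]; rewrite !mxE.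
  rewrite eqxx mul1r modnDml -addnA subnKC // modnDr modn_small //.
by case: eqP => [ra_k|]; [case/eqP: k_neq; apply: val_inj | rewrite mul0r].
Qed.

End ShiftMatrix.

Section PathAssignment.
Variables (N : network) (n n1 n2 n3 : nat) (R : comUnitRingType).
Variables (i j : 'I_3) (es : seq (link N)) (e0 : link N).
Hypothesis walk_es : is_walk (src N i) (dst N j) es.
Hypothesis uniq_es : uniq es.
Hypothesis size_es : (size es <= dmax N)%N.
Hypothesis dmax_lt : (dmax N < n)%N.
Local Notation L := (size es).
Local Notation E k := (nth e0 es k).

(* Route a unit symbol along the walk [es]: every LEC is 0 except those
   forwarding the symbol from one link of the walk to the next. *)
Definition path_lec (s : Slot N) : R :=
  match s with
  | inl (inl (_, e)) => (e == E 0)%:R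
  | inl (inr (e', e)) => [&& e' \in es, ((index e' es).+1 < L)%N & e == E (index e' es).+1]%:R
  | inr (e, _) => (e == E L.-1)%:R
  end.

Definition path_point (v : Var N n n1 n2 n3) : R :=
  if v is inl (inl (inl (_, s))) then path_lec s else 0.

Lemma eps_path_point tau s : (tau < dmax N + n)%N -> eps path_point tau s = path_lec s.
Proof. by move=> tau_lt; rewrite /eps; case: insubP => [k|]; rewrite ?tau_lt. Qed.

Lemma state_path_point k e sg : (sg + k < dmax N + n)%N ->
  state path_point i sg k e = ((k < L)%N && (e == E k))%:R.
Proof.
have [L_gt0 head_src linked _] := walk_nth e0 walk_es.
elim: k e sg => [|k IH] e sg sgk_lt /=.
  rewrite eps_path_point /=; last by rewrite addn0 in sgk_lt.
  by have [->|] := eqVneq e (E 0); rewrite ?head_src ?eqxx ?L_gt0 ?andbF //; case: ifP.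
have sgk_lt' : (sg + k < dmax N + n)%N by rewrite (leq_trans _ sgk_lt) // addnS.
rewrite big_mkcond /= (bigD1 (E k)) //= big1 ?addr0 => [|e' e'_neq]; last first.
  by case: ifP => // _; rewrite IH // (negbTE e'_neq) andbF mulr0.
rewrite IH // eqxx andbT eps_path_point //=.
have [k_lt|k_ge] := ltnP k L; last by rewrite mulr0 ltnNge (leq_trans k_ge) //; case: ifP.
rewrite mulr1 mem_nth // index_uniq //=.
have [k1_lt|] := ltnP k.+1 L; last by case: ifP.
by have [->|] := eqVneq e (E k.+1); rewrite ?linked ?eqxx //=; case: ifP.
Qed.

Lemma resp_path_point d tau : (d <= tau)%N -> (tau < dmax N + n)%N ->
  resp path_point i j d tau = (d == L)%:R.
Proof.
have [L_gt0 _ _ last_dst] := walk_nth e0 walk_es.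
case: d => [|d] d_le tau_lt /=; first by rewrite eq_sym eqn0Ngt L_gt0.
rewrite big_mkcond /= (bigD1 (E L.-1)) //= big1 ?addr0 => [|e e_neq]; last first.
  by case: ifP => // _; rewrite eps_path_point //= (negbTE e_neq) mul0r.
rewrite last_dst eqxx eps_path_point //= eqxx mul1r state_path_point; last first.
  by lia.
have [d_lt|L_le] := ltnP d L; last by rewrite gtn_eqF // ltnS.
by rewrite nth_uniq ?prednK // -(inj_eq succn_inj) prednK // eq_sym.
Qed.

Lemma Mmx_path_point : Mmx path_point i j = shift_mx R n L.
Proof.
apply/matrixP => r c; rewrite !mxE.
have resp_L d : (d <= dmax N)%N -> resp path_point i j d (n - 1 - r + dmax N) = (d == L)%:R.
  by move=> d_le; apply: resp_path_point; have := ltn_ord r; lia.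
have L_lt : (L < (dmax N).+1)%N by [].
rewrite big_mkcond (bigD1 (Ordinal L_lt)) //= big1 ?addr0 => [|d d_neq].
  by rewrite resp_L ?eqxx //; case: ifP.
rewrite resp_L; last by rewrite -ltnS.
have -> : (d == L :> nat) = false by apply: contraNF d_neq => /eqP d_L; apply/eqP/val_inj.
by case: ifP.
Qed.

Lemma Mmx_path_point_unit : Mmx path_point i j \in unitmx.
Proof. by rewrite Mmx_path_point shift_mx_unit // (leq_trans size_es) // ltnW. Qed.

End PathAssignment.

Section NetworkConditions.
Variables (N : network) (n n1 n2 n3 : nat).
Local Notation Var := (Var N n n1 n2 n3).

Definition mpoly_var (R : nzRingType) (v : Var) : {mpoly R[#|Var|]} := 'X_(enum_rank v).

Lemma mpoly_var_eval (R : nzRingType) (S : comNzRingType) (f : {rmorphism R -> S})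
    (x : Var -> S) :
  meval (x \o enum_val) \o map_mpoly f \o mpoly_var R = x.
Proof.
apply: functional_extensionality => v.
by rewrite /= /mpoly_var map_mpolyX mevalXU /= enum_rankK.
Qed.

Lemma det_Mmx_mpoly_var_neq0 (R : idomainType) i j :
  connect (step_avoid set0) (src N i) (dst N j) -> src N i != dst N j -> (dmax N < n)%N ->
  \det (Mmx (mpoly_var R) i j) != 0.
Proof.
move=> reach_ij ij dmax_lt; have [es walk_es uniq_es] := walk_of_reach reach_ij ij.
have [e0 _] : exists e0 : link N, true by case: es walk_es {uniq_es} => [|e0 _] //; exists e0.
have := Mmx_path_point_unit n1 n2 n3 R e0 walk_es uniq_es (walk_size_dmax walk_es uniq_es) dmax_lt.
rewrite -(mpoly_var_eval idfun (path_point R es e0)) Mmx_map unitmxE det_map_mx.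
by apply: contraTneq => ->; rewrite rmorph0 unitr0.
Qed.
Lemma conditions_at_comp (R : comUnitRingType) (K : fieldType) (x : Var -> R)
    (f : {rmorphism R -> K}) :
  conditions_at (Mmx x) (V1 x) (Amx x) (Bmx x) f <->
  admissible (f \o x) /\
  rank_conditions_mx (Mmx (f \o x)) (V1 (f \o x)) (Amx (f \o x)) (Bmx (f \o x)).
Proof.
rewrite /conditions_at /admissible /rank_conditions_mx /V2_of /V3_of.
rewrite !Mmx_map V1_map Amx_map Bmx_map /=.
split=> -[dets rk]; split=> // i j ij; move: (dets i j ij).
  by rewrite Mmx_map unitmxE det_map_mx unitfE.
by rewrite Mmx_map unitmxE det_map_mx unitfE.
Qed.

Lemma decodable_of_rank_conditions (K : fieldType) (x : Var -> K) :
  mincut (src N i1) (dst N i0) = 0%N -> admissible x ->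
  rank_conditions_mx (Mmx x) (V1 x) (Amx x) (Bmx x) -> decodable x.
Proof.
move=> cut0 adm; apply: decodable_mx_of_rank_conditions; rewrite ?adm //.
exact/Mmx_unreachable/mincut_eq0_reach.
Qed.

Lemma rank_conditions_of_decodable (K : fieldType) (x : Var -> K) :
  admissible x -> decodable x -> rank_conditions_mx (Mmx x) (V1 x) (Amx x) (Bmx x).
Proof. by move=> adm; apply: rank_conditions_mx_of_decodable; rewrite ?adm. Qed.

Lemma admissible_of_rank_conditions (R : idomainType) (K : fieldType)
    (f : {rmorphism {mpoly R[#|Var|]} -> K}) :
  acyclic N -> (forall i j, (i, j) != (i1, i0) -> 0 < mincut (src N i) (dst N j))%N ->
  (dmax N < n)%N -> (0 < n3)%N -> (n3 <= n2)%N -> injective f ->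
  let x := f \o mpoly_var R in
  rank_conditions_mx (Mmx x) (V1 x) (Amx x) (Bmx x) -> admissible x.
Proof.
move=> acyc cut_pos dmax_lt n3_gt0 n32 f_inj x rk i j ij.
have Mij_neq0 := rank_conditions_mx_neq0 n3_gt0 n32 rk ij.
have src_dst : src N i != dst N j by apply: contra_neq Mij_neq0; apply: Mmx_loop.
rewrite Mmx_map unitmxE det_map_mx unitfE (raddf_eq0 _ f_inj).
by rewrite det_Mmx_mpoly_var_neq0 // mincut_gt0_reach // cut_pos.
Qed.

End NetworkConditions.

Local Close Scope ring_scope.
Unset Implicit Arguments.

Theorem theorem6 (p : nat) (N : network) (n n1 n2 n3 : nat) :
  prime p ->
  acyclic N ->
  (forall i : 'I_3, mincut (src N i) (dst N i) = 1) ->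
  mincut (src N i1) (dst N i0) = 0 ->
  (forall i j : 'I_3, (i, j) != (i1, i0) -> 0 < mincut (src N i) (dst N j)) ->
  dmax N < n ->
  0 < n3 -> n3 <= n2 -> n2 <= n1 -> n1 <= n ->
  (rank_conditions N n n1 n2 n3 p ->
     exists q0 : nat, forall F : finFieldType, (p \in [pchar F])%R -> q0 < #|F| ->
       exists x : Var N n n1 n2 n3 -> F,
         admissible x /\ decodable x)
  /\
  (n1 + n2 = n -> n1 + n3 = n ->
     forall F : finFieldType, (p \in [pchar F])%R ->
     forall x : Var N n n1 n2 n3 -> F,
       admissible x -> decodable x -> rank_conditions N n n1 n2 n3 p).
Proof.
move=> _ acyc _ cut10 cut_pos dmax_lt n3_gt0 n32 _ _.
pose X : Var N n n1 n2 n3 -> _ := mpoly_var 'F_p.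
pose gen := @tofrac {mpoly 'F_p[#|Var N n n1 n2 n3|]}.
have gen_inj : injective gen by move=> a b /eqP; rewrite tofrac_eq => /eqP.
split=> [rk | _ _ F charFp x adm dec].
  have adm_gen := admissible_of_rank_conditions acyc cut_pos dmax_lt n3_gt0 n32 gen_inj rk.
  have [Q Q0 Q_conds] := conditions_at_witness (proj2 (conditions_at_comp X gen) (conj adm_gen rk)).
  exists (msize Q) => F charFp Q_lt.
  have [pt Q_pt] := mpoly_map_nonvanishing (Fp_rmorph charFp) Q0 (ltnW Q_lt).
  pose ev := meval pt \o map_mpoly (Fp_rmorph charFp).
  have [adm_ev rk_ev] := (conditions_at_comp X ev).1 (Q_conds _ ev Q_pt).
  by exists (ev \o X); split; last exact: decodable_of_rank_conditions.
have rk := rank_conditions_of_decodable adm dec.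
rewrite -(mpoly_var_eval (Fp_rmorph charFp) x) in adm rk.
have := conditions_at_lift gen_inj ((conditions_at_comp X _).2 (conj adm rk)).
by case/conditions_at_comp.
Qed.
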